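(* Let $G$ be a cellulation of a closed orientable surface $\Sigma$ (every component of $\Sigma\smallsetminus G$ is an open disk; equivalently $G$ is an orientable ribbon graph), and let $G^*$ be the dual cellulation. Then $\widetilde P_{G^*,\Sigma}(Y,X)$ is obtained from $\widetilde P_{G,\Sigma}(X,Y)$ by replacing each formal coefficient $[V]$ with $[V^{\perp}]$.
   Context: The dual $G^*$ has a vertex for each face of $G$ and, for each edge $e$ of $G$, an edge $e^*$ crossing $e$ once and disjoint from the other edges of $G$. Let $w$ be the intersection form on $H_1(\Sigma;\mathbb R)$ (a symplectic form). For a subspace $V\subset H_1(\Sigma;\mathbb R)$, $V^{\perp}=\{u\in H_1(\Sigma;\mathbb R): w(u,v)=0\ \forall v\in V\}$. To each subspace $V$ associate a formal commuting variable $[V]$. For a graph $G\subset\Sigma$ with inclusion $i$ and spanning subgraph $H\subset G$, let $c(H)$ be the number of components of $H$ and $k(H)=\dim\ker\big(i_*\colon H_1(H;\mathbb R)\to H_1(\Sigma;\mathbb R)\big)$. Define $$\widetilde P_{G,\Sigma}(X,Y)=\sum_{H\subset G}[\,i_*(H_1(H;\mathbb R))\,]\;X^{c(H)-c(G)}\,Y^{k(H)},$$ a polynomial in $X,Y$ with coefficients in the formal variables $[V]$. *)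

From HB Require Import structures.
From mathcomp Require Import all_boot all_order all_fingroup all_algebra.
From mathcomp Require Import reals.
From mathcomp.multinomials Require Import freeg.
Set Implicit Arguments. Unset Strict Implicit. Unset Printing Implicit Defensive.
Import GRing.Theory.
Local Open Scope ring_scope.

(* Cellulations of closed orientable surfaces as combinatorial maps           *)
(* (= orientable ribbon graphs).                                               *)
(* A map is given by a finite set of darts D, a permutation s (rotation of    *)
(* darts around their vertex) and a fixed-point-free involution a (the two    *)
(* darts of an edge).  Vertices of G = s-orbits, edges = a-orbits, faces =    *)
(* orbits of phi := s \o a.  The dual map Gdual is (D, phi, a): its vertices    *)
(* are the faces of G, its edge e_dual is the a-orbit of e, and its faces are    *)
(* the vertices of G.                                                         *)
(* H_1(Sigma;R) is computed as the cellular homology of the common            *)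
(* subdivision Gamma of G and Gdual (a quadrangulation of Sigma):               *)
(*  0-cells: vertices, edge-midpoints and faces of G;                         *)
(*  1-cells: g_d (= inl d), the half of the edge of d from the vertex of d    *)
(*           to the midpoint of its edge, and h_d (= inr d), the half of the  *)
(*           dual edge from the face of d to the midpoint of the edge of d;   *)
(*  2-cells: one corner c_y per dart y, the quadrilateral                      *)
(*           v(y) - e(y) - f(s y) - e(s y), with boundary                     *)
(*           g_y - h_(a y) + h_(s y) - g_(s y).                               *)
(* G and Gdual are subcomplexes of Gamma.  A subspace of H_1 = Z / B is         *)
(* represented by its preimage in the cycle space Z (a subspace containing    *)
(* the boundary space B); this is a bijection.                                *)

Section RibbonGraph.
Variables (R : realType) (D : finType) (s a : {perm D}).

Definition phi (x : D) : D := s (a x).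

Definition C1 := {ffun (D + D)%type -> R^o}.

Definition ch (k : D + D) : C1 := [ffun j => (j == k)%:R].

(* cellular boundary d1 : C_1 -> C_0 of Gamma.  0-cells are indexed by a    *)
(* dart in them (coordinates are repeated along orbits, which is harmless):  *)
(* inl (inl x) = vertex of x, inl (inr x) = edge-midpoint of x,              *)
(* inr x = face of x.  d g_d = e(d) - v(d), d h_d = e(d) - f(d).             *)
Definition bd1 (c : C1) : {ffun ((D + D) + D)%type -> R^o} :=
  [ffun k => match k with
             | inl (inl x) => - \sum_(d | fconnect s x d) c (inl d)
             | inl (inr x) => \sum_(d | fconnect a x d) (c (inl d) + c (inr d))
             | inr x => - \sum_(d | fconnect phi x d) c (inr d)
             end].

Definition Zcyc : {vspace C1} := lker (linfun bd1).

Definition bd2 (y : D) : C1 :=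
  ch (inl y) - ch (inr (a y)) + ch (inr (s y)) - ch (inl (s y)).

Definition Bnd : {vspace C1} := <<[seq bd2 y | y <- enum D]>>%VS.

(* spanning subgraphs of G (resp. Gdual ) = sets of edges, encoded as          *)
(* a-stable sets of darts (the same encoding serves for Gdual, since e <-> e_dual) *)
Definition edge_set (S : {set D}) : bool := [forall d in S, a d \in S].

Definition suppG (S : {set D}) : {vspace C1} :=
  <<[seq ch (inl d) | d <- enum S]>>%VS.
Definition suppD (S : {set D}) : {vspace C1} :=
  <<[seq ch (inr d) | d <- enum S]>>%VS.

(* H_1(H;R) for the spanning subgraph H of G with edge set S                 *)
(* (resp. of Gdual with dual edge set S), as cycles of Gamma supported on H    *)
Definition ZG (S : {set D}) : {vspace C1} := (Zcyc :&: suppG S)%VS.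
Definition ZD (S : {set D}) : {vspace C1} := (Zcyc :&: suppD S)%VS.

(* number of connected components of a spanning subgraph with edge set S,    *)
(* where vertices are the orbits of rot (rot = s for G, rot = phi for Gdual ): *)
(* darts are linked to their rot-successor and, along edges of S, to their   *)
(* a-partner.                                                                 *)
Definition ncomp (rot : D -> D) (S : {set D}) : nat :=
  n_comp (fun x y => (y == rot x) || ((x \in S) && (y == a x))) predT.

(* Intersection form: the intersection number of a cycle z of G with a cycle *)
(* b of Gdual (which meet transversally, only at edge midpoints, each edge     *)
(* crossing its dual edge once) is the signed count of crossings; up to the  *)
(* global factor 2 (and a global sign) this is                               *)
Definition pairing (z b : C1) : R^o := \sum_(d : D) z (inl d) * b (inr d).
(* Every class of H_1 has a representative in G and one in Gdual, so          *)
(* w([z],[b]) = pairing z b / 2 defines w on H_1(Sigma;R).                   *)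

(* V^perp, for a subspace V of H_1 given by its preimage U in Zcyc:          *)
(* the classes [b], b a cycle of Gdual, with w([z],[b]) = 0 for every cycle z  *)
(* of G representing an element of V.                                        *)
Definition perp (U : {vspace C1}) : {vspace C1} :=
  ((ZD setT :&: \bigcap_(z <- vbasis (U :&: ZG setT)) lker (linfun (pairing z)))
     + Bnd)%VS.

(* Formal polynomials.  A monomial [V] X^i Y^j is the generator (V, i, j) of *)
(* the free abelian group on ({vspace C1} * nat * nat); the polynomials       *)
(* P~ are Z-linear combinations of such monomials.                           *)
Definition mono := ({vspace C1} * nat * nat)%type.

Definition fgmapk (f : mono -> mono) (P : {freeg mono}) : {freeg mono} :=
  \sum_(k <- dom P) << coeff k P *g f k >>.

(* P~_{G,Sigma}(X,Y) = sum_H [i_* H_1(H)] X^(c(H)-c(G)) Y^(k(H)) *)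
Definition PG : {freeg mono} :=
  \sum_(S : {set D} | edge_set S)
     << ((ZG S + Bnd)%VS, (ncomp s S - ncomp s setT)%N, \dim (ZG S :&: Bnd)) >>.

Definition PGdual : {freeg mono} :=
  \sum_(S : {set D} | edge_set S)
     << ((ZD S + Bnd)%VS, (ncomp phi S - ncomp phi setT)%N, \dim (ZD S :&: Bnd)) >>.

End RibbonGraph.

Definition comb_map (D : finType) (s a : {perm D}) : Prop :=
  [/\ #|D| != 0%N,
      (forall d, a (a d) = d /\ a d != d) &
      (forall x y, connect (fun u v => (v == s u) || (v == a u)) x y)].

From HB Require Import structures.
From mathcomp Require Import all_boot all_order all_fingroup all_algebra.
From mathcomp Require Import reals.
From mathcomp.multinomials Require Import freeg.
From mathcomp Require Import ring lra.
Set Implicit Arguments. Unset Strict Implicit. Unset Printing Implicit Defensive.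
Import GRing.Theory.
Local Open Scope ring_scope.

(* Work in the cellular chains of the common subdivision of G and its dual G'.
   Fix an edge set S; let H be the spanning subgraph of G with edges S, H' the
   spanning subgraph of G' whose edges are the duals of the other edges, Z(H)
   and Z(H') their cycles, and B the boundaries of the corner 2-cells.

   (1) The boundaries lying in H' are the boundaries of the 2-chains constant on
   the components of H, and such a 2-chain has zero boundary iff it is constant
   on the components of G; hence dim (Z(H') :&: B) = c(H) - c(G).
   Symmetrically dim (Z(H) :&: B) = c(H') - c(G').

   (2) Z(H') + B is the annihilator of Z(H) + B under the intersection pairing.
   Cycles of H and H' share no edge, and a boundary in G pairs trivially with a
   cycle of G', the pairing splitting into sums over edges and over faces.
   Conversely, by linear duality a cycle b of G' orthogonal to Z(H) agrees on
   the edges of S with the sum of a function constant on edges and a function P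
   constant on vertices; subtracting the boundary of P / 2 leaves a cycle of H'.

   Complementing S then matches the two polynomials monomial by monomial. *)

Section ComponentFunctions.
Variables (K : fieldType) (D : finType).

Lemma sum_orbit_invariant_eq0 (f : D -> D) (nu b : D -> K) : injective f ->
  (forall x, nu (f x) = nu x) -> (forall x, \sum_(d | fconnect f x d) b d = 0) ->
  \sum_d nu d * b d = 0.
Proof.
move=> injf nu_f b_orbit.
have nu_conn x y : fconnect f x y -> nu x = nu y.
  by apply: fconnect_invariant => z; apply/eqP/nu_f.
rewrite (partition_big (froot f) xpredT) //=; apply: big1 => r _.
have [x /eqP rx | no_x] := pickP (fun x => froot f x == r); last by rewrite big_pred0.
rewrite (eq_bigl (fconnect f x)) => [|y]; last first.
  by rewrite -rx (root_connect (fconnect_sym injf)) fconnect_sym.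
rewrite (eq_bigr (fun d => nu x * b d)) => [|d /nu_conn <-] //.
by rewrite -mulr_sumr b_orbit mulr0.
Qed.

Definition component_indicator (e : rel D) (r : D) : {ffun D -> K^o} :=
  [ffun x => (fingraph.root e x == r)%:R].

Lemma dim_component_constant (e : rel D) (W : {vspace {ffun D -> K^o}}) :
  connect_sym e -> (forall l, l \in W <-> forall x y, e x y -> l y = l x) ->
  \dim W = n_comp e predT.
Proof.
move=> sym_e memW.
have W_conn l : l \in W -> forall x y, connect e x y -> l x = l y.
  move=> /memW l_e x y exy.
  have cl : closed e [pred z | l z == l x].
    by apply: intro_closed => // u v /l_e luv; rewrite !inE luv.
  by have := closed_connect cl exy; rewrite !inE eqxx => /esym/eqP.
have W_root l : l \in W -> forall x, l x = l (fingraph.root e x).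
  by move=> /W_conn l_conn x; apply: l_conn; apply: connect_root.
set X := [seq component_indicator e r | r <- enum (fingraph.roots e)].
have spanX : <<X>>%VS = W.
  apply/eqP; rewrite eqEsubv; apply/andP; split.
    apply/span_subvP => _ /mapP[r _ ->]; apply/memW => x y /connect1 exy.
    by rewrite !ffunE (fingraph.rootP sym_e exy).
  apply/subvP => l lW.
  have -> : l = \sum_(r <- enum (fingraph.roots e)) l r *: component_indicator e r.
    apply/ffunP => x; rewrite sum_ffunE (bigD1_seq (fingraph.root e x)) ?enum_uniq //=.
      rewrite big1_seq => [|r /andP[/negbTE xr _]]; last by rewrite !ffunE eq_sym xr scaler0.
      by rewrite !ffunE eqxx addr0 -W_root // [_ *: _]mulr1.
    by rewrite mem_enum; apply: roots_root.
  by rewrite big_seq; apply: memv_suml => r rR; rewrite memvZ // memv_span // map_f.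
have freeX : free X.
  have size_X : size X = size (enum (fingraph.roots e)) by rewrite size_map.
  rewrite -[X]in_tupleE; apply/freeP => k sum_k0 i.
  have i_lt : (i < size (enum (fingraph.roots e)))%N by rewrite -size_X.
  have [r0 _] : exists r0 : D, true by case: (enum _) i_lt => // r0; exists r0.
  set r := nth r0 (enum (fingraph.roots e)) i.
  have rR : fingraph.roots e r by have := mem_nth r0 i_lt; rewrite mem_enum.
  have X_r (j : 'I_(size X)) : (in_tuple X)`_j r = (j == i)%:R.
    have j_lt : (j < size (enum (fingraph.roots e)))%N by rewrite -size_X.
    by rewrite /= (nth_map r0) // ffunE (eqP rR) nth_uniq ?enum_uniq // eq_sym.
  have := congr1 (fun l : {ffun D -> K^o} => l r) sum_k0.
  rewrite sum_ffunE ffunE (bigD1 i) //= big1 => [|j /negbTE ji].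
    by rewrite ffunE X_r eqxx addr0 [_ *: _]mulr1.
  by rewrite ffunE X_r ji scaler0.
by rewrite -spanX (eqnP freeX) size_map -cardE; apply: eq_card => x; rewrite !inE andbT.
Qed.
End ComponentFunctions.

Lemma sum_fconnect_comp (D : finType) (V : nmodType) (f : D -> D) (F : D -> V) x :
  injective f -> \sum_(d | fconnect f x d) F (f d) = \sum_(d | fconnect f x d) F d.
Proof.
move=> injf; rewrite [RHS](reindex_inj injf) /=.
by apply: eq_bigl => d; rewrite -(same_fconnect1_r injf).
Qed.

Lemma fconnect_invol (D : finType) (f : D -> D) : involutive f ->
  forall x y, fconnect f x y = (y == x) || (y == f x).
Proof.
move=> fK x y; apply/idP/idP => [|/orP[/eqP->|/eqP->]]; [|exact: connect0|exact: fconnect1].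
have cl : closed (frel f) [pred z | (z == x) || (z == f x)].
  by move=> u v /eqP <-; rewrite !inE (can2_eq fK fK) (inj_eq (can_inj fK)) orbC.
by move=> /(closed_connect cl); rewrite !inE eqxx => <-.
Qed.

Lemma sum_fconnect_invol (D : finType) (V : nmodType) (f : D -> D) (F : D -> V) x :
  involutive f -> f x != x -> \sum_(d | fconnect f x d) F d = F x + F (f x).
Proof.
move=> fK fx_x; rewrite (bigD1 x) ?connect0 // (bigD1 (f x)) /=; last first.
  by rewrite fconnect1 fx_x.
rewrite big1 ?addr0 // => d /andP[/andP[]]; rewrite fconnect_invol //.
by case/orP => /eqP->; rewrite eqxx.
Qed.

Section Annihilator.
Variable K : fieldType.

Lemma sub_annihilator_mx m n (Q : 'M[K]_(m, n)) (w : 'rV_n) :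
  (forall z : 'cV_n, Q *m z = 0 -> w *m z = 0) -> (w <= Q)%MS.
Proof.
move=> annih; rewrite submxE; apply/eqP/matrixP => i j.
have := annih (col j (cokermx Q)).
rewrite colE [Q *m _]mulmxA mulmx_coker mul0mx [w *m _]mulmxA -colE.
by move=> /(_ erefl)/colP/(_ i); rewrite !mxE.
Qed.

Lemma sum_enum_rank (D : finType) (F : 'I_#|D| -> K) :
  \sum_j F j = \sum_d F (enum_rank d).
Proof.
by rewrite (reindex enum_rank) //; exists enum_val => x _; rewrite ?enum_rankK ?enum_valK.
Qed.

Lemma annihilator_span (D I : finType) (q : I -> D -> K) (w : D -> K) :
  (forall z : D -> K, (forall i, \sum_d q i d * z d = 0) -> \sum_d w d * z d = 0) ->
  exists c : I -> K, forall d, w d = \sum_i c i * q i d.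
Proof.
move=> annih.
pose Q : 'M[K]_(#|I|, #|D|) := \matrix_(i, j) q (enum_val i) (enum_val j).
have /submxP[c wc] : (\row_j w (enum_val j) <= Q)%MS.
  apply: sub_annihilator_mx => z /matrixP Qz; apply/matrixP => i0 k.
  rewrite !mxE sum_enum_rank -[RHS](annih (fun d => z (enum_rank d) k)).
    by apply: eq_bigr => d _; rewrite !mxE enum_rankK.
  move=> i; have := Qz (enum_rank i) k; rewrite !mxE sum_enum_rank => {2}<-.
  by apply: eq_bigr => d _; rewrite !mxE !enum_rankK.
exists (fun i => c 0 (enum_rank i)) => d.
have := congr1 (fun v : 'rV_#|D| => v 0 (enum_rank d)) wc; rewrite /= !mxE enum_rankK => ->.
by rewrite sum_enum_rank; apply: eq_bigr => i _; rewrite !mxE !enum_rankK.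
Qed.
End Annihilator.

Section FreegMap.
Variables (R : realType) (D : finType) (f : mono R D -> mono R D).

Lemma fgmapkE P : fgmapk f P = fglift (fun k => << f k >> : {freeg mono R D}) P.
Proof.
rewrite -{2}[P]Freeg_dom fglift_Freeg /prelift big_map; apply: eq_bigr => k _.
by apply/eqP/freeg_eqP => m; rewrite coeffZ !coeffU mul1r.
Qed.

HB.instance Definition _ :=
  GRing.isAdditive.Build _ _ (fglift (fun k => << f k >> : {freeg mono R D}))
    (lift_is_additive _).

Lemma fgmapk_sum (I : Type) (r : seq I) (Pr : pred I) (F : I -> mono R D) :
  fgmapk f (\sum_(i <- r | Pr i) << F i >>) = \sum_(i <- r | Pr i) << f (F i) >>.
Proof.
rewrite fgmapkE (big_morph _ (raddfD (fglift _)) (raddf0 _)).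
by apply: eq_bigr => i _ /=; rewrite liftU scale1r.
Qed.
End FreegMap.

Section Chains.
Variables (R : realType) (D : finType).
Local Notation C := (C1 R D).

Lemma span_chP (X : seq (D + D)) (c : C) :
  reflect (forall k, k \notin X -> c k = 0) (c \in <<map (@ch R D) X>>%VS).
Proof.
apply: (iffP idP) => [|c_out].
  rewrite -[map _ _]in_tupleE => /coord_span -> k kX; rewrite sum_ffunE big1 // => i _.
  have /mapP[j jX ->] : (map (@ch R D) X)`_i \in map (@ch R D) X by rewrite mem_nth ?size_tuple.
  by rewrite !ffunE; case: eqP kX => [->|]; rewrite ?jX // [_ *: _]mulr0.
rewrite [c](_ : _ = \sum_(k | k \in X) c k *: ch R k).
  by apply: memv_suml => k kX; rewrite memvZ // memv_span // map_f.
apply/ffunP => j; rewrite sum_ffunE; have [jX | jX] := boolP (j \in X).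
  rewrite (bigD1 j) //= big1 => [|k /andP[_ /negbTE kj]].
    by rewrite !ffunE eqxx addr0 [_ *: _]mulr1.
  by rewrite !ffunE eq_sym kj [_ *: _]mulr0.
rewrite c_out // big1 // => k kX; rewrite !ffunE.
by case: eqP jX => [->|]; rewrite ?kX // [_ *: _]mulr0.
Qed.

Lemma suppGP (S : {set D}) (c : C) : reflect
  ((forall d, c (inr d) = 0) /\ (forall d, d \notin S -> c (inl d) = 0)) (c \in suppG R S).
Proof.
rewrite /suppG (map_comp (@ch R D) inl); apply: (iffP idP) => [/span_chP c_out | [c_inr c_inl]].
  split=> d => [|dS]; apply: c_out; apply/mapP => -[// x].
  by rewrite mem_enum => xS [dx]; rewrite dx xS in dS.
apply/span_chP => -[d dS|d _] //; apply: c_inl; apply: contra dS => dS.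
by rewrite map_f ?mem_enum.
Qed.

Lemma suppDP (S : {set D}) (c : C) : reflect
  ((forall d, c (inl d) = 0) /\ (forall d, d \notin S -> c (inr d) = 0)) (c \in suppD R S).
Proof.
rewrite /suppD (map_comp (@ch R D) inr); apply: (iffP idP) => [/span_chP c_out | [c_inl c_inr]].
  split=> d => [|dS]; apply: c_out; apply/mapP => -[// x].
  by rewrite mem_enum => xS [dx]; rewrite dx xS in dS.
apply/span_chP => -[d _|d dS] //; apply: c_inr; apply: contra dS => dS.
by rewrite map_f ?mem_enum.
Qed.

Lemma suppG0 (c : C) : (c \in suppG R set0) = (c == 0).
Proof.
apply/suppGP/eqP => [[c_inr c_inl] | ->]; last by split=> d; rewrite ffunE.
by apply/ffunP => -[d|d]; rewrite ffunE ?c_inr // c_inl ?inE.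
Qed.

Lemma suppD0 (c : C) : (c \in suppD R set0) = (c == 0).
Proof.
apply/suppDP/eqP => [[c_inl c_inr] | ->]; last by split=> d; rewrite ffunE.
by apply/ffunP => -[d|d]; rewrite ffunE ?c_inl // c_inr ?inE.
Qed.
End Chains.

Section RibbonGraph.
Variables (R : realType) (D : finType) (s a : {perm D}).
Hypotheses (aK : involutive a) (a_fixfree : forall d, a d != d).
Local Notation C := (C1 R D).
Local Notation Fn := {ffun D -> R^o}.
Local Notation bd1 := (@bd1 R D s a).
Local Notation Zcyc := (@Zcyc R D s a).
Local Notation Bnd := (@Bnd R D s a).

Lemma phi_inj : injective (phi s a).
Proof. by move=> x y /perm_inj/perm_inj. Qed.

Lemma bd1_is_linear : linear bd1.
Proof.
move=> k u v; apply/ffunP => -[[x|x]|x]; rewrite !ffunE; under eq_bigr do rewrite !ffunE.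
- by rewrite big_split /= -scaler_sumr scalerN opprD.
- rewrite (eq_bigr (fun d => k *: (u (inl d) + u (inr d)) + (v (inl d) + v (inr d)))).
    by rewrite big_split /= -scaler_sumr.
  by move=> d _; rewrite scalerDr addrACA.
- by rewrite big_split /= -scaler_sumr scalerN opprD.
Qed.
HB.instance Definition _ := GRing.isLinear.Build R C _ _ bd1 bd1_is_linear.

Lemma memZcyc c : (c \in Zcyc) = (bd1 c == 0).
Proof. by rewrite memv_ker lfunE. Qed.

(* The boundary of the 2-chain assigning l y to the corner of dart y. *)
Definition bnd2 (l : Fn) : C := [ffun k => match k with
  | inl d => l d - l ((s^-1)%g d) | inr d => l ((s^-1)%g d) - l (a d) end].

Lemma bnd2_is_linear : linear bnd2.
Proof. by move=> k u v; apply/ffunP => -[x|x]; rewrite !ffunE scalerBr addrACA opprD. Qed.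
HB.instance Definition _ := GRing.isLinear.Build R Fn C _ bnd2 bnd2_is_linear.

Lemma bnd2_delta y : bnd2 [ffun x => (x == y)%:R] = bd2 R s a y.
Proof.
apply/ffunP => -[d|d]; rewrite !ffunE /= (can2_eq (permKV s) (permK s)).
  by rewrite subr0 addr0.
by rewrite (can2_eq aK aK) sub0r subr0 addrC.
Qed.

Lemma Bnd_limg : Bnd = limg (linfun bnd2).
Proof.
apply/eqP; rewrite eqEsubv; apply/andP; split.
  by apply/span_subvP => _ /mapP[y _ ->]; rewrite -bnd2_delta -lfunE memv_img ?memvf.
apply/subvP => _ /memv_imgP[l _ ->]; rewrite lfunE.
have -> : l = \sum_y l y *: [ffun x => (x == y)%:R].
  apply/ffunP => x; rewrite sum_ffunE (bigD1 x) //= big1 => [|y /negbTE yx].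
    by rewrite !ffunE eqxx addr0 [_ *: _]mulr1.
  by rewrite !ffunE eq_sym yx [_ *: _]mulr0.
rewrite linear_sum; apply: memv_suml => y _; rewrite linearZ /= bnd2_delta memvZ //.
by rewrite memv_span // map_f ?mem_enum.
Qed.

Lemma memBndP v : reflect (exists l, v = bnd2 l) (v \in Bnd).
Proof.
rewrite Bnd_limg; apply: (iffP memv_imgP) => [[l _ ->]|[l ->]]; exists l; rewrite ?lfunE //.
by rewrite memvf.
Qed.

Lemma bd1_bnd2 l : bd1 (bnd2 l) = 0.
Proof.
apply/ffunP => -[[x|x]|x]; rewrite !ffunE; under eq_bigr do rewrite !ffunE.
- rewrite sumrB -[X in _ - X](sum_fconnect_comp (fun d => l ((s^-1)%g d)) x (@perm_inj _ s)).
  by under [X in _ - X]eq_bigr do rewrite permK; rewrite subrr oppr0.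
- under eq_bigr do rewrite addrA subrK.
  by rewrite sumrB (sum_fconnect_comp l x (@perm_inj _ a)) subrr.
- rewrite sumrB -[X in X - _](sum_fconnect_comp (fun d => l ((s^-1)%g d)) x phi_inj).
  by under eq_bigr do rewrite /phi permK; rewrite subrr oppr0.
Qed.

Lemma edge_setT : edge_set a setT.
Proof. by apply/forallP => d; rewrite !inE. Qed.

Lemma edge_setC (S : {set D}) : edge_set a (~: S) = edge_set a S.
Proof.
suff edge_setC_sub T : edge_set a T -> edge_set a (~: T).
  by apply/idP/idP => /edge_setC_sub //; rewrite setCK.
move=> /forallP T_a; apply/forallP => d; rewrite !inE; apply/implyP/contra => adT.
by have /implyP/(_ adT) := T_a (a d); rewrite aK.
Qed.

Definition subgraph_rel (rot : D -> D) (S : {set D}) : rel D :=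
  fun x y => (y == rot x) || ((x \in S) && (y == a x)).

Lemma connect_sym_subgraph (rot : D -> D) (S : {set D}) :
  injective rot -> edge_set a S -> connect_sym (subgraph_rel rot S).
Proof.
move=> rot_inj /forallP S_a.
pose edge_rel := [rel x y | (x \in S) && (y == a x)].
have edge_sym : symmetric edge_rel.
  by move=> x y /=; apply/andP/andP => -[zS /eqP->]; rewrite aK eqxx (implyP (S_a _) zS).
have eq_rel : subgraph_rel rot S =2 relU (frel rot) edge_rel.
  by move=> x y; rewrite /= eq_sym.
move=> x y; rewrite !(eq_connect eq_rel).
exact: (relU_sym (fconnect_sym rot_inj) (sym_connect_sym edge_sym)) x y.
Qed.

Definition comp_defect (rot : D -> D) (S : {set D}) (l : Fn) : C :=
  [ffun k => match k with
    | inl x => l (rot x) - l x | inr x => if x \in S then l (a x) - l x else 0 end].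

Lemma comp_defect_is_linear rot S : linear (comp_defect rot S).
Proof.
move=> k u v; apply/ffunP => -[x|x]; rewrite !ffunE; last case: (x \in S).
- by rewrite scalerBr addrACA opprD.
- by rewrite scalerBr addrACA opprD.
- by rewrite scaler0 addr0.
Qed.
HB.instance Definition _ rot S :=
  GRing.isLinear.Build R Fn C _ (comp_defect rot S) (comp_defect_is_linear rot S).

(* Functions on darts that are constant on the connected components of the
   spanning subgraph with edge set S, whose vertices are the rot-orbits. *)
Definition compfun (rot : D -> D) (S : {set D}) : {vspace Fn} :=
  lker (linfun (comp_defect rot S)).

Lemma compfunP (rot : D -> D) (S : {set D}) (l : Fn) :
  reflect (forall x, l (rot x) = l x /\ (x \in S -> l (a x) = l x)) (l \in compfun rot S).
Proof.
rewrite memv_ker lfunE; apply: (iffP eqP) => [l0 x | l_inv].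
  move: (congr1 (fun c : C => c (inl x)) l0) (congr1 (fun c : C => c (inr x)) l0).
  rewrite !ffunE => /eqP; rewrite subr_eq0 => /eqP l_rot l_a; split=> // xS.
  by move/eqP: l_a; rewrite xS subr_eq0 => /eqP.
apply/ffunP => -[x|x]; rewrite !ffunE; first by rewrite (l_inv x).1 subrr.
by case: ifP => // xS; rewrite (l_inv x).2 ?subrr.
Qed.

Lemma dim_compfun (rot : D -> D) (S : {set D}) : injective rot -> edge_set a S ->
  \dim (compfun rot S) = ncomp a rot S.
Proof.
move=> rot_inj S_a; apply: dim_component_constant (connect_sym_subgraph rot_inj S_a) _ => l.
split=> [/compfunP l_inv x y /orP[/eqP-> | /andP[xS /eqP->]] | l_rel].
- exact: (l_inv x).1.
- exact: (l_inv x).2.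
apply/compfunP => x; split=> [|xS]; apply: l_rel; by rewrite /subgraph_rel ?eqxx ?xS ?orbT.
Qed.

Lemma compfunT_sub (rot : D -> D) (S : {set D}) : (compfun rot setT <= compfun rot S)%VS.
Proof.
apply/subvP => l /compfunP l_inv; apply/compfunP => x.
by split=> [|_]; [exact: (l_inv x).1 | apply: (l_inv x).2; rewrite inE].
Qed.

Lemma dim_limg_compfun (T : 'Hom(Fn, C)) (rot : D -> D) (S : {set D}) :
  lker T = compfun rot setT ->
  \dim (T @: compfun rot S) = (\dim (compfun rot S) - \dim (compfun rot setT))%N.
Proof.
move=> kerT; have := limg_ker_dim T (compfun rot S).
by rewrite kerT (capv_idPr (compfunT_sub rot S)) => <-; rewrite addKn.
Qed.

Lemma bnd2_suppD (S : {set D}) (l : Fn) : (bnd2 l \in suppD R (~: S)) = (l \in compfun s S).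
Proof.
have l_sV (l_s : forall y, l (s y) = l y) y : l ((s^-1)%g y) = l y.
  by rewrite -{2}(permKV s y) l_s.
apply/suppDP/compfunP => [[l_inl l_inr] x | l_inv].
  have l_s y : l (s y) = l y.
    by have /eqP := l_inl (s y); rewrite ffunE permK subr_eq0 => /eqP.
  split=> // xS; have := l_inr x; rewrite inE xS ffunE l_sV // => /(_ isT)/eqP.
  by rewrite subr_eq0 => /eqP.
have l_s y : l (s y) = l y by exact: (l_inv y).1.
split=> d; rewrite ffunE; first by rewrite l_sV // subrr.
by rewrite inE negbK l_sV // => dS; rewrite (l_inv d).2 // subrr.
Qed.

Lemma ker_bnd2 : lker (linfun bnd2) = compfun s setT.
Proof. by apply/vspaceP => l; rewrite memv_ker lfunE -suppD0 -setCT -bnd2_suppD. Qed.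

Lemma ZD_cap_Bnd (S : {set D}) :
  (ZD R s a (~: S) :&: Bnd)%VS = (linfun bnd2 @: compfun s S)%VS.
Proof.
apply/vspaceP => v; rewrite /ZD !memv_cap; apply/idP/memv_imgP => [|[l l_S ->]].
  by move=> /andP[/andP[_ v_S] /memBndP[l v_l]]; exists l; rewrite ?lfunE -?bnd2_suppD -?v_l.
by rewrite lfunE memZcyc bd1_bnd2 eqxx bnd2_suppD l_S; apply/memBndP; exists l.
Qed.

Lemma dim_ZD_cap_Bnd (S : {set D}) : edge_set a S ->
  \dim (ZD R s a (~: S) :&: Bnd) = (ncomp a s S - ncomp a s setT)%N.
Proof.
move=> S_a; rewrite ZD_cap_Bnd dim_limg_compfun ?ker_bnd2 //.
by rewrite !dim_compfun ?edge_setT //; exact: perm_inj.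
Qed.

(* Relabelling corners by [a]: the corner of dart y of G is the corner of dart
   a y of the dual map. *)
Definition bnd2_dual (m : Fn) : C := bnd2 [ffun x => m (a x)].

Lemma bnd2_dual_is_linear : linear bnd2_dual.
Proof.
move=> k u v; rewrite /bnd2_dual -linearP; congr bnd2.
by apply/ffunP => x; rewrite !ffunE.
Qed.
HB.instance Definition _ := GRing.isLinear.Build R Fn C _ bnd2_dual bnd2_dual_is_linear.

Lemma memBnd_dualP v : reflect (exists m, v = bnd2_dual m) (v \in Bnd).
Proof.
apply: (iffP (memBndP v)) => -[l ->]; exists [ffun x => l (a x)] => //.
by congr bnd2; apply/ffunP => x; rewrite !ffunE aK.
Qed.

Lemma phi_a_sV d : phi s a (a ((s^-1)%g d)) = d.
Proof. by rewrite /phi aK permKV. Qed.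

Lemma bnd2_dual_suppG (S : {set D}) (m : Fn) :
  (bnd2_dual m \in suppG R S) = (m \in compfun (phi s a) (~: S)).
Proof.
have m_asV (m_phi : forall y, m (phi s a y) = m y) d : m (a ((s^-1)%g d)) = m d.
  by rewrite -{2}(phi_a_sV d) m_phi.
apply/suppGP/compfunP => [[m_inr m_inl] x | m_inv].
  have m_phi y : m (phi s a y) = m y.
    by have /eqP := m_inr (phi s a y); rewrite !ffunE /phi permK !aK subr_eq0 => /eqP <-.
  split=> // xS; have := m_inl x; rewrite -in_setC xS !ffunE m_asV // => /(_ isT)/eqP.
  by rewrite subr_eq0 => /eqP.
have m_phi y : m (phi s a y) = m y by exact: (m_inv y).1.
split=> d; rewrite !ffunE ?aK m_asV // ?subrr // => dS.
by rewrite (m_inv d).2 ?subrr // inE.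
Qed.

Lemma ker_bnd2_dual : lker (linfun bnd2_dual) = compfun (phi s a) setT.
Proof. by apply/vspaceP => m; rewrite memv_ker lfunE -suppG0 bnd2_dual_suppG setC0. Qed.

Lemma ZG_cap_Bnd (S : {set D}) :
  (ZG R s a S :&: Bnd)%VS = (linfun bnd2_dual @: compfun (phi s a) (~: S))%VS.
Proof.
apply/vspaceP => v; rewrite /ZG !memv_cap; apply/idP/memv_imgP => [|[m m_S ->]].
  move=> /andP[/andP[_ v_S] /memBnd_dualP[m v_m]]; exists m; rewrite ?lfunE //.
  by rewrite -bnd2_dual_suppG -v_m.
rewrite lfunE memZcyc bd1_bnd2 eqxx bnd2_dual_suppG m_S.
by apply/memBnd_dualP; exists m.
Qed.

Lemma dim_ZG_cap_Bnd (S : {set D}) : edge_set a S ->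
  \dim (ZG R s a S :&: Bnd) = (ncomp a (phi s a) (~: S) - ncomp a (phi s a) setT)%N.
Proof.
move=> S_a; rewrite ZG_cap_Bnd dim_limg_compfun ?ker_bnd2_dual //.
by rewrite !dim_compfun ?edge_setT ?edge_setC //; exact: phi_inj.
Qed.

Local Notation pairing := (@pairing R D).

Lemma pairing_is_linear z : linear (pairing z).
Proof.
move=> k u v; rewrite /pairing scaler_sumr -big_split; apply: eq_bigr => d _.
by rewrite !ffunE /GRing.scale /=; ring.
Qed.
HB.instance Definition _ z := GRing.isLinear.Build R C R^o _ (pairing z) (pairing_is_linear z).

Definition pairingr (b z : C) : R^o := pairing z b.

Lemma pairingr_is_linear b : linear (pairingr b).
Proof.
move=> k u v; rewrite /pairingr /pairing scaler_sumr -big_split; apply: eq_bigr => d _.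
by rewrite !ffunE /GRing.scale /=; ring.
Qed.
HB.instance Definition _ b := GRing.isLinear.Build R C R^o _ (pairingr b) (pairingr_is_linear b).

Lemma mem_bigcap_pairingP (U : {vspace C}) b :
  reflect (forall z, z \in U -> pairing z b = 0)
          (b \in \bigcap_(z <- vbasis U) lker (linfun (pairing z)))%VS.
Proof.
have mem_cap (X : seq C) : (b \in \bigcap_(z <- X) lker (linfun (pairing z)))%VS =
                           all (fun z => pairing z b == 0) X.
  by elim: X => [|z X IH]; rewrite ?big_nil ?memvf // big_cons memv_cap IH memv_ker lfunE.
rewrite mem_cap.
apply: (iffP allP) => [b_orth z zU | b_orth z /vbasis_mem/b_orth->//].
suff /subvP/(_ z zU) : (U <= lker (linfun (pairingr b)))%VS by rewrite memv_ker lfunE => /eqP.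
rewrite -(span_basis (vbasisP U)); apply/span_subvP => y /b_orth.
by rewrite memv_ker lfunE.
Qed.

Lemma dual_cycle_sums b : b \in Zcyc -> (forall d, b (inl d) = 0) ->
  (forall x, \sum_(d | fconnect a x d) b (inr d) = 0) /\
  (forall x, \sum_(d | fconnect (phi s a) x d) b (inr d) = 0).
Proof.
rewrite memZcyc => /eqP/ffunP b_cycle b_inl; split=> x.
  by have := b_cycle (inl (inr x)); rewrite !ffunE; under eq_bigr do rewrite b_inl add0r.
by have /eqP := b_cycle (inr x); rewrite !ffunE oppr_eq0 => /eqP.
Qed.

Lemma pairing_Bnd_dual_cycle z b : z \in Bnd -> (forall d, z (inr d) = 0) ->
  b \in Zcyc -> (forall d, b (inl d) = 0) -> pairing z b = 0.
Proof.
move=> /memBndP[l ->] z_inr /dual_cycle_sums b_sums /b_sums[b_edge b_face].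
have l_sV d : l ((s^-1)%g d) = l (a d).
  by have /eqP := z_inr d; rewrite ffunE subr_eq0 => /eqP.
(* l + l \o a is constant on edges and l \o a on faces of G. *)
have sum_edge : \sum_d (l d + l (a d)) * b (inr d) = 0.
  by apply: (sum_orbit_invariant_eq0 (@perm_inj _ a)) => // x; rewrite aK addrC.
have sum_face : \sum_d l (a d) * b (inr d) = 0.
  by apply: (sum_orbit_invariant_eq0 phi_inj) => // x; rewrite -l_sV /phi permK.
rewrite /pairing (eq_bigr (fun d => (l d + l (a d)) * b (inr d) - 2 * (l (a d) * b (inr d)))).
  by rewrite sumrB -mulr_sumr sum_edge sum_face mulr0 subrr.
by move=> d _; rewrite ffunE l_sV; ring.
Qed.

Lemma ZG_chain (S : {set D}) (z : D -> R) : (forall d, d \notin S -> z d = 0) ->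
  (forall x, \sum_(d | fconnect a x d) z d = 0) ->
  (forall x, \sum_(d | fconnect s x d) z d = 0) ->
  ([ffun k => if k is inl d then z d else 0] : C) \in ZG R s a S.
Proof.
move=> z_out z_edge z_vertex; rewrite /ZG memv_cap memZcyc.
apply/andP; split; last by apply/suppGP; split=> d; rewrite ffunE // => /z_out.
apply/eqP/ffunP => -[[x|x]|x]; rewrite !ffunE; under eq_bigr do rewrite !ffunE.
- by rewrite z_vertex oppr0.
- by under eq_bigr do rewrite addr0; rewrite z_edge.
- by rewrite big1 ?oppr0.
Qed.

Lemma orth_ZG_decomposition (S : {set D}) (b : C) :
  (forall z, z \in ZG R s a S -> pairing z b = 0) ->
  exists X M P : D -> R, [/\ forall d, d \in S -> X d = 0, forall d, M (a d) = M d,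
    forall d, P (s d) = P d & forall d, b (inr d) = X d + M d + P d].
Proof.
move=> b_orth.
(* The linear equations cutting out the cycles of H among 1-chains on G:
   vanishing off S, zero sum on each edge and at each vertex. *)
pose q (i : D + (D + D)) d : R := match i with
  | inl j => ((j \notin S) && (d == j))%:R
  | inr (inl x) => (fconnect a x d)%:R
  | inr (inr x) => (fconnect s x d)%:R end.
have [c b_c] : exists c, forall d, b (inr d) = \sum_i c i * q i d.
  apply: annihilator_span => z z_q.
  have sum_indicator (P : pred D) : \sum_(d | P d) z d = \sum_d (P d)%:R * z d.
    by rewrite big_mkcond; apply: eq_bigr => d _; case: (P d); rewrite ?mul1r ?mul0r.
  have /b_orth : ([ffun k => if k is inl d then z d else 0] : C) \in ZG R s a S.
    apply: ZG_chain => [d dS | x | x]; rewrite ?sum_indicator; last 2 first.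
    - exact: (z_q (inr (inl x))).
    - exact: (z_q (inr (inr x))).
    rewrite -(z_q (inl d)) (bigD1 d) //= big1 => [|e /negbTE ed]; last by rewrite ed andbF mul0r.
    by rewrite dS eqxx mul1r addr0.
  by rewrite /pairing => E; rewrite -[RHS]E; apply: eq_bigr => d _; rewrite ffunE mulrC.
exists (fun d => \sum_j c (inl j) * q (inl j) d).
exists (fun d => \sum_j c (inr (inl j)) * q (inr (inl j)) d).
exists (fun d => \sum_j c (inr (inr j)) * q (inr (inr j)) d); split => [d dS | d | d | d].
- apply: big1 => j _; case: (eqVneq d j) => [<-|/negbTE dj]; by rewrite /= ?dS ?dj ?andbF mulr0.
- by apply: eq_bigr => j _; rewrite /= -(same_fconnect1_r (@perm_inj _ a)).
- by apply: eq_bigr => j _; rewrite /= -(same_fconnect1_r (@perm_inj _ s)).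
- by rewrite b_c !big_sumType; apply: addrA.
Qed.

Lemma orth_ZG_modBnd (S : {set D}) (b : C) : edge_set a S -> b \in ZD R s a setT ->
  (forall z, z \in ZG R s a S -> pairing z b = 0) ->
  exists l, b - bnd2 l \in ZD R s a (~: S).
Proof.
rewrite /ZD memv_cap => /forallP S_a /andP[b_cyc /suppDP[b_inl _]].
move=> /orth_ZG_decomposition[X [M [P [X_S M_a P_s b_XMP]]]].
have b_anti d : b (inr d) + b (inr (a d)) = 0.
  have [b_edge _] := dual_cycle_sums b_cyc b_inl.
  by rewrite -(sum_fconnect_invol (fun x => b (inr x)) aK (a_fixfree d)) b_edge.
have P_sV d : P ((s^-1)%g d) = P d by rewrite -{2}(permKV s d) P_s.
(* On an edge {d, a d} of S, b d = M d + P d and b (a d) = M d + P (a d) = - b d,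
   so b d = (P d - P (a d)) / 2. *)
exists [ffun x => P x / 2]; rewrite memv_cap memvB //=; last by rewrite memZcyc bd1_bnd2.
apply/suppDP; split=> d; rewrite !ffunE ?b_inl P_sV ?subrr ?subr0 // inE negbK => dS.
have adS : a d \in S by exact: (implyP (S_a d)).
by have := b_anti d; rewrite !b_XMP !X_S // M_a; lra.
Qed.

Lemma ZG_subT (S : {set D}) : (ZG R s a S <= ZG R s a setT)%VS.
Proof.
apply/subvP => z; rewrite /ZG !memv_cap => /andP[-> /suppGP[z_inr _]] /=.
by apply/suppGP; split=> // d; rewrite inE.
Qed.

Lemma perp_ZG (S : {set D}) : edge_set a S ->
  perp s a (ZG R s a S + Bnd)%VS = (ZD R s a (~: S) + Bnd)%VS.
Proof.
move=> S_a; apply/vspaceP => v; apply/memv_addP/memv_addP => -[b b_in [t t_B ->]].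
  move: b_in; rewrite memv_cap => /andP[b_ZD /mem_bigcap_pairingP b_orth].
  have [l b_l] : exists l, b - bnd2 l \in ZD R s a (~: S).
    apply: orth_ZG_modBnd => // z zG; apply: b_orth.
    by rewrite memv_cap (subvP (addvSl _ _) z zG) (subvP (ZG_subT S) z zG).
  exists (b - bnd2 l) => //; exists (bnd2 l + t); last by rewrite addrA subrK.
  by rewrite memvD //; apply/memBndP; exists l.
exists b; last by exists t.
move: b_in; rewrite /ZD !memv_cap => /andP[b_cyc /suppDP[b_inl b_out]].
rewrite b_cyc; apply/andP; split; first by apply/suppDP; split=> // d; rewrite inE.
apply/mem_bigcap_pairingP => _ /memv_capP[/memv_addP[z1 z1G [z2 z2B ->]] zG].
move: z1G zG; rewrite /ZG !memv_cap => /andP[_ /suppGP[z1_inr z1_out]] /andP[_ /suppGP[z_inr _]].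
have -> : pairing (z1 + z2) b = pairing z1 b + pairing z2 b := raddfD (pairingr b) z1 z2.
rewrite (pairing_Bnd_dual_cycle z2B _ b_cyc b_inl) => [|d]; last first.
  by have := z_inr d; rewrite ffunE z1_inr add0r.
rewrite addr0 /pairing big1 // => d _.
by case: (boolP (d \in S)) => dS; [rewrite b_out ?mulr0 // inE dS | rewrite z1_out ?mul0r].
Qed.
End RibbonGraph.

Theorem lemma5p1 (R : realType) (D : finType) (s a : {perm D}) :
  comb_map s a ->
  @fgmapk R D (fun m => (m.1.1, m.2, m.1.2)) (@PGdual R D s a) =
  @fgmapk R D (fun m => (@perp R D s a m.1.1, m.1.2, m.2)) (@PG R D s a).
Proof.
case=> _ a_invol _.
have aK : involutive a by move=> d; case: (a_invol d).
have a_fixfree d : a d != d by case: (a_invol d).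
rewrite /PGdual /PG !fgmapk_sum /= [LHS](reindex_inj (@setC_inj D)) /=.
rewrite (eq_bigl (edge_set a)) => [|S]; last exact: edge_setC.
apply: eq_bigr => S S_a.
by rewrite perp_ZG // dim_ZD_cap_Bnd // dim_ZG_cap_Bnd.
Qed.
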